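(* Let $n\ge1$ and let $c:E_n\to\mathbb C$ be an admissible edge weighting of $Q_n$ with $c(ij)\ne0$ for all $ij\in E_n$. Then there is $\mathbf t\in\Delta_{n-1}$ such that the representation $\rho_c$ is unitarily equivalent to $\rho_{\mathbf t}$.
   Context: For $n\ge1$, identify integers $0\le i<2^n$ with their $n$-digit binary representations $i=\sum_k i_k2^k$; $\mathrm{par}_k(i)=\sum_{r=0}^k i_r\bmod2$, and $i\#k$ is $i$ with its $k$-th digit flipped. The hypercube $Q_n$ has vertex classes $U_n=\{i\mid\mathrm{par}_{n-1}(i)=0\}$, $V_n=\{j\mid\mathrm{par}_{n-1}(j)=1\}$ and edge set $E_n$ of pairs $ij$ ($i\in U_n$, $j\in V_n$, $j=i\#k$ for some $k<n$); $\mathcal N(x)$ denotes neighbors. $C^\ast(Q_n)$ is the universal unital C*-algebra generated by projections $p_x$ with $\sum_{u\in U_n}p_u=1=\sum_{v\in V_n}p_v$ and $p_up_v=0$ for non-adjacent $u,v$. A weighting $c:E_n\to\mathbb C$ (with $c(ij):=0$ for non-adjacent $i,j$) is admissible if $\sum_{i\in\mathcal N(j_1)\cap\mathcal N(j_2)}c(ij_1)\overline{c(ij_2)}=\delta_{j_1j_2}$ for all $j_1,j_2\in V_n(c)$ and $\sum_{j\in\mathcal N(i_1)\cap\mathcal N(i_2)}c(i_1j)\overline{c(i_2j)}=\delta_{i_1i_2}$ for all $i_1,i_2\in U_n(c)$, where $U_n(c),V_n(c)$ are the vertices incident to some edge of nonzero weight. For such $c$, $\rho_c:C^\ast(Q_n)\to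 M_{U_n(c)}$ is the representation with $\rho_c(p_i)=E_{ii}$ ($i\in U_n(c)$), $\rho_c(p_j)=[c(i_1j)\overline{c(i_2j)}]_{i_1,i_2\in U_n(c)}$ ($j\in V_n(c)$), $\rho_c(p_x)=0$ otherwise. $\Delta_{n-1}=\{[t_0,\dots,t_{n-1}]\mid t_k\ge0,\sum t_k=1\}$; for $\mathbf t\in\Delta_{n-1}$, $c_{\mathbf t}(ij)=(-1)^{\mathrm{par}_k(i)}\sqrt{t_k}$ for $i\in U_n$, $j=i\#k$, and $\rho_{\mathbf t}:C^\ast(Q_n)\to M_{U_n}$ is the representation with $\rho_{\mathbf t}(p_i)=E_{ii}$, $\rho_{\mathbf t}(p_j)=[c_{\mathbf t}(i_1j)\overline{c_{\mathbf t}(i_2j)}]_{i_1,i_2\in U_n}$. *)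

(* vertices of Q_n are 'I_(2^n); complex numbers are R[i] for R : realType *)
From HB Require Import structures.
From mathcomp Require Import all_boot all_order all_algebra.
From mathcomp Require Import complex.
From mathcomp Require Import reals.
Set Implicit Arguments. Unset Strict Implicit. Unset Printing Implicit Defensive.
Import Order.TTheory GRing.Theory Num.Theory.
Local Open Scope ring_scope.

Definition bit (i k : nat) : nat := odd (i %/ 2 ^ k).
Definition par (k i : nat) : bool := odd (\sum_(r < k.+1) bit i r).
Definition flip (i k : nat) : nat := if odd (i %/ 2 ^ k) then (i - 2 ^ k)%N else (i + 2 ^ k)%N.

Section Hypercube.
Variable n : nat.
Notation vert := 'I_(2 ^ n).

Definition inU (x : vert) : bool := ~~ par n.-1 x.
Definition inV (x : vert) : bool := par n.-1 x.
Definition Uset : {set vert} := [set x | inU x].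
Definition Vset : {set vert} := [set x | inV x].
Definition edge (i j : vert) : bool :=
  [&& inU i, inV j & [exists k : 'I_n, (j : nat) == flip i k]].
Definition nbr (x : vert) : {set vert} := [set y | edge x y || edge y x].

Variable R : realType.
Local Notation C := R[i].

(* a weighting is given by its values on edges; c(ij) := 0 for non-adjacent i, j *)
Definition cext (c : vert -> vert -> C) (i j : vert) : C := if edge i j then c i j else 0.

Definition Uc (c : vert -> vert -> C) : {set vert} :=
  [set i | inU i && [exists j, edge i j && (c i j != 0)]].
Definition Vc (c : vert -> vert -> C) : {set vert} :=
  [set j | inV j && [exists i, edge i j && (c i j != 0)]].

Definition admissible (c : vert -> vert -> C) : Prop :=
  (forall j1 j2, j1 \in Vc c -> j2 \in Vc c ->
     \sum_(i in nbr j1 :&: nbr j2) cext c i j1 * conjc (cext c i j2) = (j1 == j2)%:R)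
  /\ (forall i1 i2, i1 \in Uc c -> i2 \in Uc c ->
     \sum_(j in nbr i1 :&: nbr i2) cext c i1 j * conjc (cext c i2 j) = (i1 == i2)%:R).

(* matrices indexed by a finite set A of vertices: 'M_#|A|, entry (a,b) <-> (enum_val a, enum_val b) *)
Definition Emx (A : {set vert}) (x : vert) : 'M[C]_#|A| :=
  \matrix_(a, b) ((enum_val a == x) && (enum_val b == x))%:R.

(* rho_c : C*(Q_n) -> M_{U_n(c)}, given on the generators p_x *)
Definition rho_c (c : vert -> vert -> C) (x : vert) : 'M[C]_#|Uc c| :=
  if x \in Uc c then Emx (Uc c) x
  else if x \in Vc c then
    \matrix_(a, b) (cext c (enum_val a) x * conjc (cext c (enum_val b) x))
  else 0.

Definition inDelta (t : 'I_n -> R) : Prop :=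
  (forall k, 0 <= t k) /\ \sum_(k < n) t k = 1.

Definition c_t (t : 'I_n -> R) (i j : vert) : C :=
  if edge i j then
    match [pick k : 'I_n | (j : nat) == flip i k] with
    | Some k => (-1) ^+ par k i * Complex (Num.sqrt (t k)) 0
    | None => 0
    end
  else 0.

Definition rho_t (t : 'I_n -> R) (x : vert) : 'M[C]_#|Uset| :=
  if x \in Uset then Emx Uset x
  else \matrix_(a, b) (c_t t (enum_val a) x * conjc (c_t t (enum_val b) x)).

Definition adjmx (p q : nat) (M : 'M[C]_(p, q)) : 'M[C]_(q, p) := (map_mx conjc M)^T.

(* unitary equivalence of two representations of C*(Q_n), given by their
   values on the generators p_x (which determine a representation) *)
Definition unitarily_equiv (p q : nat) (rho1 : vert -> 'M[C]_p) (rho2 : vert -> 'M[C]_q) : Prop :=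
  exists W : 'M[C]_(q, p),
    W *m adjmx W = 1%:M /\ adjmx W *m W = 1%:M /\
    forall x : vert, W *m rho1 x *m adjmx W = rho2 x.

End Hypercube.

(* Row orthogonality of the two even corners of a square face of Q_n, and column
   orthogonality of its two odd corners, force opposite edges of the face to carry weights
   of equal modulus.  Hence |c| only depends on the direction k of an edge, and
   t_k := |c|^2 lies in the simplex because the row of an even vertex has norm one.  The
   unimodular ratios c/c_t then have trivial holonomy around every face: row orthogonality
   of c and the sign rule of c_t contribute the same sign.  Multiplying them along paths
   from the vertex 0 gives a gauge psi with psi_i c(ij) = psi_j c_t(ij), and conjugation
   by the diagonal unitary diag(psi_i) carries rho_c to rho_t. *)

From mathcomp Require Import all_boot all_order all_algebra.
From mathcomp Require Import complex reals.
From mathcomp Require Import zify ring.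
Import Order.TTheory GRing.Theory Num.Theory.
Import ComplexField.Normc.
Set Implicit Arguments. Unset Strict Implicit. Unset Printing Implicit Defensive.

Definition digit (i k : nat) : bool := odd (i %/ 2 ^ k).

Lemma digit0 i : digit i 0 = odd i.
Proof. by rewrite /digit expn0 divn1. Qed.

Lemma digitS i k : digit i k.+1 = digit i./2 k.
Proof. by rewrite /digit expnS divnMA divn2. Qed.

Lemma digit_small x m r : x < 2 ^ m -> m <= r -> digit x r = false.
Proof. by move=> hx hr; rewrite /digit divn_small // (leq_trans hx) ?leq_pexp2l. Qed.

Lemma eq_from_digits x y : (forall r, digit x r = digit y r) -> x = y.
Proof.
suff: forall m x y, x < 2 ^ m -> y < 2 ^ m -> (forall r, digit x r = digit y r) -> x = y.
  by apply; apply: leq_ltn_trans (ltn_expl _ (isT : 1 < 2)); [apply: leq_addr | apply: leq_addl].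
elim=> [|m IH] {}x {}y; first by rewrite !ltnS !leqn0 => /eqP-> /eqP->.
rewrite expnS => hx hy hxy.
rewrite -(odd_double_half x) -(odd_double_half y) -!digit0 hxy.
by congr (_ + _.*2); apply: IH => [||r]; rewrite -?digitS //; lia.
Qed.

Lemma ltn_pow2_digits x m : (forall r, m <= r -> digit x r = false) -> x < 2 ^ m.
Proof.
move=> hx; have q0 : x %/ 2 ^ m = 0.
  apply: eq_from_digits => r; rewrite /digit div0n -divnMA -expnD.
  exact: hx (leq_addr _ _).
by rewrite (divn_eq x (2 ^ m)) q0 mul0n add0n ltn_pmod ?expn_gt0.
Qed.

Lemma digit_addpow2 i k : ~~ digit i k -> forall r, digit (i + 2 ^ k) r = digit i r (+) (r == k).
Proof.
elim: k i => [|k IH] i hi r.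
  case: r => [|r]; first by rewrite !digit0 oddD -digit0 (negbTE hi).
  rewrite !digitS addbF; congr digit; move: hi; rewrite digit0 => /negbTE hi.
  by rewrite -{1}(odd_double_half i) hi expn0; lia.
case: r => [|r]; first by rewrite !digit0 oddD oddX addbF.
rewrite !digitS eqSS -IH; last by rewrite -digitS.
by congr digit; rewrite expnS; lia.
Qed.

Lemma digit_flip i k r : digit (flip i k) r = digit i r (+) (r == k).
Proof.
rewrite /flip -/(digit i k); case hk: (digit i k); last by rewrite digit_addpow2 ?hk.
have [i' Ei] : exists i', i = i' + 2 ^ k.
  exists (i - 2 ^ k); rewrite subnK // -(@divn_gt0 (2 ^ k)) ?expn_gt0 //.
  by move: hk; rewrite /digit; case: (i %/ 2 ^ k).
subst i; have hk' : ~~ digit i' k.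
  by move: hk; rewrite /digit divnDr ?dvdnn // divnn expn_gt0 addn1 oddS; case: odd.
by rewrite addnK digit_addpow2 // addbK.
Qed.

Lemma flip_ltn i k m : i < 2 ^ m -> k < m -> flip i k < 2 ^ m.
Proof.
move=> hi hk; apply: ltn_pow2_digits => r hr.
by rewrite digit_flip (digit_small hi hr) (gtn_eqF (leq_trans hk hr)).
Qed.

Lemma flipK k : involutive (flip ^~ k).
Proof. by move=> i; apply: eq_from_digits => r; rewrite !digit_flip addbK. Qed.

Lemma flipC i k l : flip (flip i k) l = flip (flip i l) k.
Proof. by apply: eq_from_digits => r; rewrite !digit_flip addbAC. Qed.

Lemma flip_inj i : injective (flip i).
Proof.
move=> k l /(congr1 (digit ^~ k)); rewrite /= !digit_flip eqxx.
by case: (digit i k); case: eqP.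
Qed.

(* Two vertices at distance two have only the two obvious common neighbours. *)
Lemma flip_face x a b k l : k != l -> flip x a = flip (flip (flip x k) l) b ->
  (a == k) || (a == l).
Proof.
move=> hkl /(congr1 digit) hxy; apply/norP => -[hak hal].
have H r : (r == a) = (r == k) (+) (r == l) (+) (r == b).
  move: (congr1 (@^~ r) hxy); rewrite !digit_flip.
  by case: (digit x r); case: (r == a); case: (r == k); case: (r == l); case: (r == b).
have hab : a = b by move: (H a); rewrite eqxx (negbTE hak) (negbTE hal) => /esym/eqP.
by move: (H k); rewrite -hab eqxx (negbTE hkl) eq_sym (negbTE hak).
Qed.

Lemma par_flip m i k : par m (flip i k) = par m i (+) (k <= m).
Proof.
have E : \sum_(r < m.+1) bit (flip i k) r + (\sum_(r < m.+1) (digit i r && (r == k :> nat))).*2 =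
         \sum_(r < m.+1) bit i r + \sum_(r < m.+1 | r == k :> nat) 1.
  rewrite -muln2 big_distrl big_mkcond [X in _ = _ + X]big_mkcond -!big_split /=.
  by apply: eq_bigr => r _; rewrite /bit -!/(digit _ _) digit_flip; case: digit; case: eqP.
move/(congr1 odd): E; rewrite !oddD odd_double addbF (big_ord1_eq _ (fun=> 1)) ltnS /par => ->.
by case: (k <= m).
Qed.

Lemma digit_mod x m r : digit (x %% 2 ^ m) r = (r < m) && digit x r.
Proof.
case: (ltnP r m) => hr /=; last by apply: digit_small hr; rewrite ltn_pmod ?expn_gt0.
have E : 2 ^ m = 2 ^ (m - r) * 2 ^ r by rewrite -expnD subnK // ltnW.
rewrite /digit [in RHS](divn_eq x (2 ^ m)) [in RHS]E mulnA addnC divnDMl ?expn_gt0 //.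
by rewrite oddD oddM oddX subn_eq0 leqNgt hr andbF addbF -E.
Qed.

Lemma modn_pow2S x m :
  x %% 2 ^ m.+1 = if digit x m then flip (x %% 2 ^ m) m else x %% 2 ^ m.
Proof.
apply: eq_from_digits => r; rewrite (fun_if (digit^~ r)) digit_flip !digit_mod ltnS.
by case: ltngtP => [_|_|->]; case: (digit x m); rewrite /= ?addbF.
Qed.

Lemma flip_mod x k m :
  flip x k %% 2 ^ m = if m <= k then x %% 2 ^ m else flip (x %% 2 ^ m) k.
Proof.
apply: eq_from_digits => r; rewrite (fun_if (digit^~ r)) !digit_flip !digit_mod digit_flip.
case: (ltnP r m) => hr; case: ifP => hm //=.
  by rewrite (ltn_eqF (leq_trans hr hm)) addbF.
by rewrite gtn_eqF // (leq_trans _ hr) // ltnNge hm.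
Qed.

Lemma big_ord_ltS (T : Type) (idx : T) (op : Monoid.com_law idx) n m (hm : m < n)
    (F : 'I_n -> T) :
  \big[op/idx]_(j < n | j < m.+1) F j = op (\big[op/idx]_(j < n | j < m) F j) (F (Ordinal hm)).
Proof.
rewrite (bigD1 (Ordinal hm)) //= Monoid.mulmC; apply: congr2 => //; apply: eq_bigl => j.
by rewrite ltnS -val_eqE /=; case: ltngtP.
Qed.

Section Cube.
Variable n : nat.
Local Notation vert := 'I_(2 ^ n).

Definition vflip (x : vert) (k : 'I_n) : vert := Ordinal (flip_ltn (ltn_ord x) (ltn_ord k)).

Lemma vflipK k : involutive (vflip ^~ k).
Proof. by move=> x; apply: val_inj; rewrite /= flipK. Qed.

Lemma vflipC x k l : vflip (vflip x k) l = vflip (vflip x l) k.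
Proof. by apply: val_inj; rewrite /= flipC. Qed.

Lemma vflip_inj x : injective (vflip x).
Proof. by move=> k l /(congr1 val) /flip_inj /val_inj. Qed.

Lemma inU_vflip x k : inU (vflip x k) = ~~ inU x.
Proof.
have hk : k <= n.-1 by have := ltn_ord k; lia.
by rewrite /inU /= par_flip hk addbT.
Qed.

Lemma inVE (x : vert) : inV x = ~~ inU x.
Proof. by rewrite /inU negbK. Qed.

Lemma vflip2_neq x k l : k != l -> vflip (vflip x k) l != x.
Proof.
apply: contra => /eqP hx; apply/eqP/(@vflip_inj x).
by rewrite -{2}hx vflipK.
Qed.

Lemma edge_vflip i k : edge i (vflip i k) = inU i.
Proof.
rewrite /edge inVE inU_vflip negbK andbA andbb.
by case: (inU i) => //=; apply/existsP; exists k.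
Qed.

Lemma edge_vflipl j k : edge (vflip j k) j = ~~ inU j.
Proof. by rewrite -{2}(vflipK k j) edge_vflip inU_vflip. Qed.

Lemma edgeP i j : edge i j -> inU i /\ exists k, j = vflip i k.
Proof. by case/and3P => hi _ /existsP [k /eqP hk]; split => //; exists k; apply: val_inj. Qed.

Lemma nbrE x : nbr x = [set vflip x k | k : 'I_n].
Proof.
apply/setP => y; rewrite inE; apply/orP/imsetP => [[/edgeP | /edgeP] [_ [k ->]] | [k _ ->]].
- by exists k.
- by exists k; rewrite ?vflipK.
by rewrite edge_vflip edge_vflipl; case: (inU x); [left | right].
Qed.

Lemma nbrI_face x k l : k != l ->
  nbr x :&: nbr (vflip (vflip x k) l) = [set vflip x k; vflip x l].
Proof.
move=> hkl; apply/setP => y; rewrite in_setI !nbrE !inE.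
apply/andP/orP => [[/imsetP [a _ ->] /imsetP [b _ /(congr1 val) /= /flip_face]] | ].
  by case/(_ hkl)/orP => /eqP/val_inj ->; [left | right].
case=> /eqP ->; split; apply/imsetP.
- by exists k.
- by exists l; rewrite ?vflipK.
- by exists l.
- by exists k; rewrite // vflipC vflipK.
Qed.

Lemma pow2_gt0 : 0 < 2 ^ n.
Proof. by rewrite expn_gt0. Qed.

Definition vert0 : vert := Ordinal pow2_gt0.

Lemma inU_vert0 : inU vert0.
Proof. by rewrite /inU /par big1 // => r _; rewrite /bit div0n. Qed.

Definition prefix (x : vert) (m : nat) : vert :=
  Ordinal (leq_ltn_trans (leq_mod x (2 ^ m)) (ltn_ord x)).

Lemma prefix0 x : prefix x 0 = vert0.
Proof. by apply: val_inj; rewrite /= modn1. Qed.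

Lemma prefix_full x : prefix x n = x.
Proof. by apply: val_inj; rewrite /= modn_small. Qed.

Lemma prefixS x m (hm : m < n) :
  prefix x m.+1 = if digit x m then vflip (prefix x m) (Ordinal hm) else prefix x m.
Proof. by apply: val_inj; rewrite /= modn_pow2S (fun_if val). Qed.

Lemma prefix_vflip x k m :
  prefix (vflip x k) m = if m <= k then prefix x m else vflip (prefix x m) k.
Proof. by apply: val_inj; rewrite /= flip_mod (fun_if val). Qed.

Lemma vflip_invariant_const (T : Type) (f : vert -> T) :
  (forall x k, f (vflip x k) = f x) -> forall x, f x = f vert0.
Proof.
move=> hf x; rewrite -(prefix_full x).
elim: {1 3}n (leqnn n) => [|m IH] hm; first by rewrite prefix0.
by rewrite (prefixS _ hm); case: digit; rewrite ?hf IH // ltnW.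
Qed.

Section Potential.
Local Open Scope ring_scope.
Variables (K : comPzRingType) (g : vert -> 'I_n -> K).
Hypothesis g_vflipK : forall x k, g (vflip x k) k * g x k = 1.
Hypothesis g_face_even :
  forall x k l, inU x -> g x k * g (vflip x k) l = g x l * g (vflip x l) k.

Lemma g_face x k l : g x k * g (vflip x k) l = g x l * g (vflip x l) k.
Proof.
have [/g_face_even //|hx] := boolP (inU x).
have := @g_face_even (vflip x k) k l; rewrite inU_vflip hx vflipK vflipC => /(_ isT) E.
rewrite -[LHS]mulr1 -(g_vflipK (vflip x l) k) -[RHS]mul1r -(g_vflipK x k).
rewrite mulrA -[_ * _ * g (vflip (vflip x l) k) k]mulrA -E.
by rewrite mulrCA !mulrA.
Qed.

(* The product of [g] along the path from [vert0] to [x] that switches on the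
   digits of [x] from the lowest one upwards: digit [j] is switched on at [prefix x j]. *)
Definition potential m (x : vert) : K :=
  \prod_(j < n | (j < m)%N) (if digit x j then g (prefix x j) j else 1).

Lemma potentialS m x (hm : (m < n)%N) :
  potential m.+1 x = potential m x * (if digit x m then g (prefix x m) (Ordinal hm) else 1).
Proof. exact: big_ord_ltS. Qed.

Lemma potential_vflip_upto m x k : (m <= n)%N ->
  potential m (vflip x k) = potential m x * (if (m <= k)%N then 1 else g (prefix x m) k).
Proof.
elim: m => [|m IH] hm.
  by rewrite /potential big_pred0 // big_pred0 // mulr1.
rewrite !(potentialS _ hm) IH ?(ltnW hm) // digit_flip prefix_vflip (prefixS _ hm).
case: ltngtP => [_ | _ | emk].
- by rewrite addbF !mulr1.
- by case: digit; rewrite /= ?mulr1 ?mul1r // -!mulrA g_face.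
- have -> : Ordinal hm = k by apply: val_inj.
  case: digit => //=.
  by rewrite !mulr1 -mulrA [_ * g (vflip _ _) _]mulrC g_vflipK mulr1.
Qed.

Lemma potential_vflip x k : potential n (vflip x k) = potential n x * g x k.
Proof. by rewrite potential_vflip_upto // leqNgt ltn_ord prefix_full. Qed.

End Potential.
End Cube.

Arguments vert0 {n}.
Arguments inU_vert0 {n}.

Local Open Scope ring_scope.
Local Open Scope complex_scope.

Lemma conjcM (R : rcfType) (x y : R[i]) : conjc (x * y) = conjc x * conjc y.
Proof. exact: rmorphM. Qed.

Lemma normc_conj (R : rcfType) (z : R[i]) : normc (conjc z) = normc z.
Proof. by case: z => a b; rewrite /= sqrrN. Qed.

Lemma normc_gt0 (R : rcfType) (z : R[i]) : z != 0 -> 0 < normc z.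
Proof.
move=> hz; rewrite lt_def; apply/andP; split; first by apply: contra hz => /eqP/eq0_normc ->.
by case: z {hz} => a b; rewrite sqrtr_ge0.
Qed.

Lemma mulc_conj (R : rcfType) (z : R[i]) : z * conjc z = (normc z ^+ 2)%:C.
Proof.
case: z => a b; rewrite /= sqr_sqrtr ?addr_ge0 ?sqr_ge0 //.
by apply/eqP; rewrite eq_complex /=; apply/andP; split; apply/eqP; ring.
Qed.

Lemma potential_unitary (R : rcfType) n (g : 'I_(2 ^ n) -> 'I_n -> R[i]) m x :
  (forall x k, g x k * conjc (g x k) = 1) -> potential g m x * conjc (potential g m x) = 1.
Proof.
move=> hg; rewrite /potential rmorph_prod -big_split big1 // => j _ /=.
by rewrite (fun_if conjc) rmorph1; case: ifP => _; rewrite ?hg ?mulr1.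
Qed.

Lemma diag_unitarily_equiv (R : realType) n m (rho1 rho2 : 'I_(2 ^ n) -> 'M[R[i]]_m)
    (d : 'I_m -> R[i]) :
  (forall a, d a * conjc (d a) = 1) ->
  (forall x a b, d a * rho1 x a b * conjc (d b) = rho2 x a b) ->
  unitarily_equiv rho1 rho2.
Proof.
move=> hd hrho; pose D := diag_mx (\row_a d a).
have adjD : adjmx D = diag_mx (\row_a conjc (d a)).
  by rewrite /adjmx map_diag_mx tr_diag_mx; congr diag_mx; apply/rowP => a; rewrite !mxE.
exists D; rewrite adjD; split; [|split].
- by rewrite mulmx_diag -diag_const_mx; congr diag_mx; apply/rowP => a; rewrite !mxE hd.
- by rewrite mulmx_diag -diag_const_mx; congr diag_mx; apply/rowP => a; rewrite !mxE mulrC hd.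
- by move=> x; rewrite mul_diag_mx mul_mx_diag; apply/matrixP => a b; rewrite !mxE hrho.
Qed.

(* [a], [b], [d], [e] are the moduli of the edges of a square face, [a] opposite [e];
   the hypotheses come from the orthogonality of its rows and of its columns. *)
Lemma face_moduli (F : realFieldType) (a b d e : F) : 0 < b -> 0 < d -> 0 < e ->
  a * b = d * e -> a * d = b * e -> a = e.
Proof.
move=> hb hd he hrow hcol.
have hdb : d = b.
  have : (d ^+ 2 - b ^+ 2) * e = 0 by rewrite mulrBl !expr2 -!mulrA -hrow -hcol; ring.
  move/eqP; rewrite mulf_eq0 (gt_eqF he) orbF subr_eq0 eqrXn2 ?ltW //; exact: eqP.
by apply: (mulIf (lt0r_neq0 hb)); rewrite hrow hdb mulrC.
Qed.

Section AdmissibleWeighting.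
Variables (R : realType) (n : nat).
Local Notation vert := 'I_(2 ^ n).
Local Notation C := R[i].
Variable c : vert -> vert -> C.
Hypothesis hadm : admissible c.
Hypothesis hnz : forall i j, edge i j -> c i j != 0.
Hypothesis hn : (0 < n)%N.

Lemma Uc_full : Uc c = Uset n.
Proof.
apply/setP => i; rewrite !inE; case hi: (inU i) => //=.
by apply/existsP; exists (vflip i (Ordinal hn)); rewrite edge_vflip hi hnz // edge_vflip.
Qed.

Lemma Vc_full : Vc c = Vset n.
Proof.
apply/setP => j; rewrite !inE inVE; case hj: (inU j) => //=.
by apply/existsP; exists (vflip j (Ordinal hn)); rewrite edge_vflipl hj hnz // edge_vflipl hj.
Qed.

Definition edge_val (f : vert -> vert -> C) (x : vert) (k : 'I_n) : C :=
  if inU x then f x (vflip x k) else f (vflip x k) x.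

Local Notation weight := (edge_val c).

Lemma edge_val_vflip f x k : edge_val f (vflip x k) k = edge_val f x k.
Proof. by rewrite /edge_val inU_vflip vflipK; case: inU. Qed.

Lemma weight_neq0 x k : weight x k != 0.
Proof. by rewrite /edge_val; case hx: (inU x); rewrite hnz // ?edge_vflip ?edge_vflipl hx. Qed.

Lemma weight_row_orth x k l : inU x -> k != l ->
  weight x k * conjc (weight (vflip x k) l) +
  weight x l * conjc (weight (vflip x l) k) = 0.
Proof.
move=> hx hkl; have hx' : inU (vflip (vflip x k) l) by rewrite !inU_vflip hx.
have := hadm.2 x (vflip (vflip x k) l); rewrite Uc_full !inE hx hx' eq_sym.
rewrite (negbTE (vflip2_neq _ hkl)) nbrI_face // big_setU1 ?big_set1 /=; last first.
  by rewrite inE (inj_eq (@vflip_inj _ x)).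
rewrite /cext /edge_val hx !inU_vflip hx /= !edge_vflip hx edge_vflipl inU_vflip hx.
by rewrite vflipC edge_vflipl inU_vflip hx => /(_ isT isT).
Qed.

Lemma weight_col_orth x k l : inU x -> k != l ->
  weight x k * conjc (weight x l) +
  weight (vflip x k) l * conjc (weight (vflip x l) k) = 0.
Proof.
move=> hx hkl; have := hadm.1 (vflip x k) (vflip x l).
rewrite Vc_full !inE !inVE !inU_vflip hx (inj_eq (@vflip_inj _ x)) (negbTE hkl).
have := nbrI_face (vflip x k) hkl; rewrite vflipK => ->.
rewrite big_setU1 ?big_set1 /=; last by rewrite inE eq_sym vflip2_neq.
rewrite /cext /edge_val hx !inU_vflip hx /= !edge_vflip hx edge_vflipl inU_vflip hx.
by rewrite vflipC edge_vflipl inU_vflip hx => /(_ isT isT).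
Qed.

Lemma normc_weight_face x k l : inU x -> k != l ->
  normc (weight (vflip x l) k) = normc (weight x k).
Proof.
move=> hx hkl.
have normc_orth (p q r s : C) :
    p * conjc q + r * conjc s = 0 -> normc p * normc q = normc r * normc s.
  by move/eqP; rewrite addr_eq0 => /eqP/(congr1 (@normc R)); rewrite normcN !normcM !normc_conj.
symmetry; apply: face_moduli (normc_orth _ _ _ _ (weight_row_orth hx hkl))
  (normc_orth _ _ _ _ (weight_col_orth hx hkl)); exact: normc_gt0 (weight_neq0 _ _).
Qed.

Lemma normc_weight_vflip x k l : normc (weight (vflip x l) k) = normc (weight x k).
Proof.
have [->|hkl] := eqVneq k l; first by rewrite edge_val_vflip.
have [hx|hx] := boolP (inU x); first exact: normc_weight_face.
have hy : inU (vflip x l) by rewrite inU_vflip.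
by have := normc_weight_face hy hkl; rewrite vflipK => ->.
Qed.

Definition modulus (k : 'I_n) : R := normc (weight vert0 k).

Lemma normc_weight x k : normc (weight x k) = modulus k.
Proof. exact: (vflip_invariant_const (fun y => normc_weight_vflip y k)). Qed.

Lemma modulus_gt0 k : 0 < modulus k.
Proof. exact: normc_gt0 (weight_neq0 _ _). Qed.

Definition tc (k : 'I_n) : R := modulus k ^+ 2.

Local Notation ct_weight := (edge_val (c_t tc)).

Lemma tc_simplex : inDelta tc.
Proof.
split=> [k|]; first exact: sqr_ge0.
have := hadm.2 vert0 vert0; rewrite Uc_full !inE inU_vert0 eqxx setIid nbrE.
rewrite big_imset /=; last by move=> k l _ _; apply: vflip_inj.
under eq_bigr => k _ do rewrite /cext edge_vflip inU_vert0 mulc_conj.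
rewrite -rmorph_sum -(rmorph1 (real_complex R)) => /(_ isT isT) /(@complexI R) <-.
by apply: eq_bigr => k _; rewrite /tc -(normc_weight vert0) /edge_val inU_vert0.
Qed.

Lemma c_t_vflip (t : 'I_n -> R) i k : inU i ->
  c_t t i (vflip i k) = (-1) ^+ par k i * (Num.sqrt (t k))%:C.
Proof.
move=> hi; rewrite /c_t edge_vflip hi; case: pickP => [k' /eqP hk' | /(_ k)]; last by rewrite eqxx.
suff -> : k' = k by [].
by apply: (@vflip_inj _ i); apply: val_inj; rewrite /= -hk'.
Qed.

Lemma ct_weightE x k :
  ct_weight x k = (-1) ^+ par k (if inU x then x else vflip x k) * (modulus k)%:C.
Proof.
have ct_weight_even y : inU y -> ct_weight y k = (-1) ^+ par k y * (modulus k)%:C.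
  by move=> hy; rewrite /edge_val hy c_t_vflip // sqrtr_sqr ger0_norm // ltW // modulus_gt0.
case hx: (inU x); first exact: ct_weight_even.
by rewrite -edge_val_vflip ct_weight_even // inU_vflip hx.
Qed.

Lemma ct_weight_real x k : conjc (ct_weight x k) = ct_weight x k.
Proof. by rewrite ct_weightE conjcM rmorph_sign conjc_real. Qed.

Lemma ct_weight_neq0 x k : ct_weight x k != 0.
Proof.
rewrite ct_weightE mulf_neq0 ?signr_eq0 // -(rmorph0 (real_complex R)).
by rewrite (inj_eq (@complexI R)) lt0r_neq0 // modulus_gt0.
Qed.

Lemma mulc_conj_ct_weight x k : ct_weight x k * conjc (ct_weight x k) =
  weight x k * conjc (weight x k).
Proof.
rewrite ct_weight_real mulc_conj normc_weight ct_weightE mulrACA -expr2 sqrr_sign mul1r.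
by rewrite -rmorphM expr2.
Qed.

(* This sign rule is what makes [c_t] admissible. *)
Lemma ct_weight_face x k l : inU x -> k != l ->
  ct_weight x k * ct_weight (vflip x k) l =
  - (ct_weight x l * ct_weight (vflip x l) k).
Proof.
move=> hx hkl; rewrite !ct_weightE !inU_vflip hx /= flipC !par_flip !leqnn.
have -> : (l <= k)%N = ~~ (k <= l)%N by case: ltngtP hkl => // /val_inj ->; rewrite eqxx.
by rewrite !signr_addb !signrN !expr1; ring.
Qed.

Definition weight_ratio x k : C := weight x k / ct_weight x k.

Definition phase x k : C := if inU x then weight_ratio x k else conjc (weight_ratio x k).

Lemma weight_ratio_unitary x k : weight_ratio x k * conjc (weight_ratio x k) = 1.
Proof.
rewrite /weight_ratio conjcM conjc_inv mulrACA -invfM mulc_conj_ct_weight divff //.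
by rewrite mulf_neq0 ?conjc_eq0 ?weight_neq0.
Qed.

Lemma phase_unitary x k : phase x k * conjc (phase x k) = 1.
Proof.
rewrite /phase; case: inU; first exact: weight_ratio_unitary.
by rewrite conjcK mulrC weight_ratio_unitary.
Qed.

Lemma phase_vflipK x k : phase (vflip x k) k * phase x k = 1.
Proof.
rewrite /phase inU_vflip /weight_ratio !edge_val_vflip -/(weight_ratio x k).
by case: inU; [rewrite mulrC |]; exact: weight_ratio_unitary.
Qed.

Lemma phase_face_even x k l : inU x ->
  phase x k * phase (vflip x k) l = phase x l * phase (vflip x l) k.
Proof.
move=> hx; have [<- // | hkl] := eqVneq k l.
rewrite /phase hx !inU_vflip hx /weight_ratio !conjcM !conjc_inv !ct_weight_real.
rewrite [LHS]mulrACA [RHS]mulrACA -!invfM.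
move/eqP: (weight_row_orth hx hkl); rewrite addr_eq0 => /eqP ->.
by rewrite ct_weight_face // invrN mulrNN.
Qed.

Definition gauge : vert -> C := potential phase n.

Lemma gauge_unitary x : gauge x * conjc (gauge x) = 1.
Proof. exact: potential_unitary phase_unitary. Qed.

Lemma gauge_cext y x : inU y -> gauge y * cext c y x = gauge x * c_t tc y x.
Proof.
move=> hy; have [/edgeP [_ [k ->]] | he] := boolP (edge y x); last first.
  by rewrite /cext /c_t (negbTE he) !mulr0.
have -> : c_t tc y (vflip y k) = ct_weight y k by rewrite /edge_val hy.
rewrite /gauge potential_vflip; [|exact: phase_vflipK | exact: phase_face_even].
rewrite /cext edge_vflip hy /phase hy /weight_ratio -mulrA divfK ?ct_weight_neq0 //.
by rewrite /edge_val hy.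
Qed.

Lemma rho_c_equiv_rho_t : unitarily_equiv (rho_c c) (rho_t tc).
Proof.
rewrite /rho_c Uc_full Vc_full.
apply: (@diag_unitarily_equiv _ _ _ _ _ (fun a => gauge (enum_val a))) => [a | x a b].
  exact: gauge_unitary.
have hU (u : 'I_#|Uset n|) : inU (enum_val u) by have := enum_valP u; rewrite inE.
rewrite /rho_t /Emx; case: ifP => hx; rewrite !mxE.
  by case: eqP => [->|]; case: eqP => [->|] //=; rewrite ?mulr0 ?mul0r // mulr1 gauge_unitary.
move: hx; rewrite !inE inVE => -> /=; rewrite !mxE.
transitivity (gauge (enum_val a) * cext c (enum_val a) x *
              conjc (gauge (enum_val b) * cext c (enum_val b) x)).
  by rewrite conjcM; ring.
by rewrite !gauge_cext // conjcM mulrACA gauge_unitary mul1r.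
Qed.
End AdmissibleWeighting.

Theorem lemma5p2 (R : realType) (n : nat) (hn : (1 <= n)%N)
  (c : 'I_(2 ^ n) -> 'I_(2 ^ n) -> R[i])
  (hadm : admissible c)
  (hnz : forall i j : 'I_(2 ^ n), edge i j -> c i j != 0) :
  exists t : 'I_n -> R, inDelta t /\ unitarily_equiv (rho_c c) (rho_t t).
Proof. by exists (tc c); split; [exact: tc_simplex | exact: rho_c_equiv_rho_t]. Qed.
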